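(* Let $(\mathcal A,\varphi,\mathcal F,\Phi)$ be a ncps of type B$'$ with associated infinitesimal ncps $(\mathcal B,\varphi,\varphi')$, let $q\in\mathcal F$ with $q^2=q$, $\Phi(q)=1$ and $(\mathcal A,\{q\})$ cyclic-antimonotone independent, let $p:=1_{\mathcal B}-q$, and let $\psi:=\varphi|_{p\mathcal Bp}$, $\psi':=(\varphi+\varphi')|_{p\mathcal Bp}$ on the algebra $p\mathcal Bp$ with unit $p$. Let $a\in\mathcal A$, let $\mu$ be the distribution of $a$ w.r.t. $\varphi$ and $\tau$ the inverse Markov–Krein transform of $\mu$. Then the infinitesimal distribution of $\tilde a:=pap$ with respect to $(p\mathcal Bp,\psi,\psi')$ is $(\mu,\mu-\tau)$.
   Context: Ncps of type B$'$ $(\mathcal A,\varphi,\mathcal F,\Phi)$: $\mathcal A$ unital complex algebra, $\varphi(1_{\mathcal A})=1$, $\mathcal F$ an algebra which is an $\mathcal A$-bimodule compatible with its multiplication, $\Phi:\mathcal F\to\mathbb C$ linear. $\mathcal B=\mathcal A\oplus\mathcal F$ with product $(a_1,f_1)(a_2,f_2)=(a_1a_2,a_1f_2+f_1a_2+f_1f_2)$, unit $1_{\mathcal A}$; $\varphi(a+f):=\varphi(a)$, $\varphi'(a+f):=\Phi(f)$. Cyclic-antimonotone independence of $(\mathcal A,\{q\})$: $\Phi(a_0qa_1\cdots a_{n-1}qa_n)=\varphi(a_0a_n)\prod_{i=1}^{n-1}\varphi(a_i)\Phi(q^n)$ for $a_l\in\mathcal A$. The distribution of $a$ w.r.t. $\varphi$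 is $\mu(x^n)=\varphi(a^n)$ on $\mathbb C[x]$. The infinitesimal distribution of $\tilde a$ in $(p\mathcal Bp,\psi,\psi')$ is the pair $x^n\mapsto\psi(\tilde a^n)$, $x^n\mapsto\psi'(\tilde a^n)$ with $\tilde a^0=p$. With $G_\mu(z)=\sum_{n\ge0}\mu(x^n)z^{-n-1}$ as a formal series, the inverse Markov–Krein transform of $\mu$ is the linear functional $\tau$ on $\mathbb C[x]$ determined by $\frac{d}{dz}G_\mu(z)=-G_\tau(z)G_\mu(z)$. *)

From HB Require Import structures.
From mathcomp Require Import all_boot all_order all_algebra.
From mathcomp Require Import reals.
From mathcomp Require Export complex.
Set Implicit Arguments. Unset Strict Implicit. Unset Printing Implicit Defensive.
Import Order.TTheory GRing.Theory Num.Theory.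
Local Open Scope ring_scope.

Section TypeBprime.
Variables (R : realType).
Local Notation C := (R[i]).
Variables (A : algType C) (F : lmodType C).
Variables (mulF : F -> F -> F) (actL : A -> F -> F) (actR : F -> A -> F).

Definition Fstructure_axioms : Prop :=
  (forall (k : C) f g h, mulF (k *: f + g) h = k *: mulF f h + mulF g h) /\
      (forall (k : C) f g h, mulF h (k *: f + g) = k *: mulF h f + mulF h g) /\
      (forall f g h, mulF f (mulF g h) = mulF (mulF f g) h) /\
      (forall (k : C) a b f, actL (k *: a + b) f = k *: actL a f + actL b f) /\
      (forall (k : C) a f g, actL a (k *: f + g) = k *: actL a f + actL a g) /\
      (forall (k : C) a b f, actR f (k *: a + b) = k *: actR f a + actR f b) /\
      (forall (k : C) a f g, actR (k *: f + g) a = k *: actR f a + actR g a) /\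
   (forall f, actL 1 f = f) /\ (forall f, actR f 1 = f) /\
       (forall a b f, actL (a * b) f = actL a (actL b f)) /\
       (forall a b f, actR f (a * b) = actR (actR f a) b) /\
       (forall a b f, actL a (actR f b) = actR (actL a f) b) /\
       (forall a f g, actL a (mulF f g) = mulF (actL a f) g) /\
       (forall a f g, mulF (actR f a) g = mulF f (actL a g)) /\
       (forall a f g, actR (mulF f g) a = mulF f (actR g a)).

Definition ncps_typeBprime (phi : A -> C) (Phi : F -> C) : Prop :=
  [/\ Fstructure_axioms, linear phi, linear Phi & phi 1 = 1].

(* The algebra B = A (+) F, elements are pairs (a, f) = a + f. *)
Definition mulB (x y : A * F) : A * F :=
  (x.1 * y.1, actL x.1 y.2 + actR x.2 y.1 + mulF x.2 y.2).
Definition oneB : A * F := (1, 0).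
Definition addB (x y : A * F) : A * F := (x.1 + y.1, x.2 + y.2).
Definition oppB (x : A * F) : A * F := (- x.1, - x.2).

Definition phiB (phi : A -> C) (x : A * F) : C := phi x.1.
Definition phiB' (Phi : F -> C) (x : A * F) : C := Phi x.2.

Definition qpow (q : F) (n : nat) : F := iter n.-1 (fun f => mulF f q) q.

Fixpoint wordq (q : F) (a : nat -> A) (k : nat) : F :=
  match k with
  | 0 => actL (a 0%N) q
  | k'.+1 => mulF (actR (wordq q a k') (a k)) q
  end.

Definition cyclic_antimonotone_indep (phi : A -> C) (Phi : F -> C) (q : F) : Prop :=
  forall (n : nat) (a : nat -> A), (0 < n)%N ->
    Phi (actR (wordq q a n.-1) (a n)) =
      phi (a 0%N * a n) * (\prod_(1 <= i < n) phi (a i)) * Phi (qpow q n).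

Fixpoint powp (p x : A * F) (n : nat) : A * F :=
  match n with
  | 0 => p
  | n'.+1 => mulB (powp p x n') x
  end.

End TypeBprime.

Definition distribution (R : realType) (A : algType R[i]) (phi : A -> R[i]) (a : A)
  (P : {poly R[i]}) : R[i] :=
  \sum_(i < size P) P`_i * phi (a ^+ i).

(* tau is the inverse Markov-Krein transform of mu:  d/dz G_mu = - G_tau G_mu
   as formal series in z^{-1}, G_nu(z) = sum_n nu(x^n) z^{-n-1}.  Comparing the
   coefficients of z^{-k-2} this says (k+1) mu(x^k) = sum_{j=0}^k tau(x^j) mu(x^{k-j}). *)
Definition inverse_Markov_Krein (R : realType) (mu tau : {poly R[i]} -> R[i]) : Prop :=
  linear tau /\
  forall k : nat,
    (k.+1)%:R * mu 'X^k = \sum_(j < k.+1) tau 'X^j * mu 'X^(k - j).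

(* Write m_j := phi(a^j).  Since p q = 0 we have pap^(k+1) = pap^k a p, so the F-part of pap^k
   obeys a first-order recursion in which the elements pap^k a^j q of F appear.  Cyclic-antimonotone
   independence makes Phi multiplicative along the q-blocks of such words, so the numbers
   G_k(l) = Phi((pap^k)_F a^l) and V_k(j,l) = Phi(pap^k a^j q a^l) satisfy linear recursions driven
   by m alone.  These give the renewal identity sum_i m_i Phi((pap^(n-i))_F) = -(n+1) m_n, while the
   inverse Markov-Krein transform is defined by sum_i m_i tau(x^(n-i)) = (n+1) m_n.  As m_0 = 1,
   convolution by m is injective, hence Phi((pap^n)_F) = -tau(x^n). *)

From HB Require Import structures.
From mathcomp Require Import all_boot all_order all_algebra.
From mathcomp Require Import reals complex.
From mathcomp Require Import ring zify.
Set Implicit Arguments. Unset Strict Implicit. Unset Printing Implicit Defensive.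
Import GRing.Theory.
Local Open Scope ring_scope.

Section LinearFunction.
Variables (K : pzRingType) (U V : lmodType K) (f : U -> V).
Hypothesis f_lin : linear f.
Let fL : {linear U -> V} := HB.pack f (GRing.isLinear.Build K U V *:%R f f_lin).

Lemma linear_fun0 : f 0 = 0. Proof. exact: raddf0 fL. Qed.
Lemma linear_funN x : f (- x) = - f x. Proof. exact: raddfN fL x. Qed.
Lemma linear_funD x y : f (x + y) = f x + f y. Proof. exact: raddfD fL x y. Qed.
Lemma linear_funB x y : f (x - y) = f x - f y. Proof. exact: raddfB fL x y. Qed.

End LinearFunction.

Section Convolution.
Variables (K : comNzRingType) (m : nat -> K).
Hypothesis m0 : m 0%N = 1.

Lemma convolutionC (x y : nat -> K) n :
  \sum_(i < n.+1) x i * y (n - i)%N = \sum_(i < n.+1) x (n - i)%N * y i.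
Proof.
rewrite (reindex_inj rev_ord_inj) /=; apply: eq_bigr => i _.
by rewrite subSS subKn 1?mulrC // -ltnS.
Qed.

Lemma deconvolution_unique (x y : nat -> K) :
  (forall n, \sum_(i < n.+1) m i * x (n - i)%N = \sum_(i < n.+1) m i * y (n - i)%N) ->
  x =1 y.
Proof.
move=> Hxy; elim/ltn_ind => n IH.
have := Hxy n; rewrite !big_ord_recl m0 !mul1r subn0.
have -> : \sum_(i < n) m (bump 0 i) * x (n - bump 0 i)%N =
          \sum_(i < n) m (bump 0 i) * y (n - bump 0 i)%N.
  by apply: eq_bigr => i _; rewrite IH // /bump /=; have := ltn_ord i; lia.
exact: addIr.
Qed.

Lemma convolution_cross k l :
  \sum_(i < k.+1) m i * m (k - i + 1 + l)%N - \sum_(i < k.+1) m (i + l)%N * m (k - i + 1)%N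
  = m (k.+1 + l)%N - m k.+1 * m l.
Proof.
pose S := \sum_(i < k.+2) m i * m (k.+1 - i + l)%N.
have -> : \sum_(i < k.+1) m i * m (k - i + 1 + l)%N = S - m k.+1 * m l.
  rewrite /S [in RHS]big_ord_recr /= subnn add0n addrK.
  by apply: eq_bigr => i _; rewrite addn1 (subSn (leq_ord i)).
have -> : \sum_(i < k.+1) m (i + l)%N * m (k - i + 1)%N = S - m 0%N * m (k.+1 + l)%N.
  rewrite /S [in RHS]big_ord_recl /= subn0 addrAC subrr add0r.
  rewrite (convolutionC (fun i => m (i + l)%N) (fun i => m (i + 1)%N)).
  by apply: eq_bigr => i _; rewrite mulrC /bump /= subSS addn1.
rewrite m0 mul1r; ring.
Qed.

Section Recursions.
Variables (V : nat -> nat -> nat -> K) (G : nat -> nat -> K).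
Hypotheses (V0 : forall j l, V 0%N j l = m (j + l)%N - m j * m l)
           (VS : forall k j l, V k.+1 j l = V k j.+1 l - m j * V k 1%N l)
           (G0 : forall l, G 0%N l = - m l)
           (GS : forall k l, G k.+1 l = G k l.+1 - V k 1%N l).

Lemma convolution_V k j l :
  \sum_(i < k.+1) m i * V (k - i)%N j l =
  \sum_(i < k.+1) m i * m (k - i + j + l)%N - \sum_(i < k.+1) m (i + l)%N * m (k - i + j)%N.
Proof.
elim: k j => [|k IH] j.
  by rewrite !big_ord1 /= V0 m0 !mul1r mulrC.
rewrite big_ord_recr /= subnn V0.
under eq_bigr => i _ do rewrite (subSn (leq_ord i)) VS mulrBr mulrCA.
rewrite sumrB -mulr_sumr !IH convolution_cross.
rewrite [X in _ = X - _]big_ord_recr [X in _ = _ - X]big_ord_recr /= subnn.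
under [X in _ = X + _ - _]eq_bigr => i _ do rewrite (subSn (leq_ord i)) addSnnS.
under [X in _ = _ - (X + _)]eq_bigr => i _ do rewrite (subSn (leq_ord i)) addSnnS.
rewrite add0n addSn; ring.
Qed.

Lemma convolution_V1 k l :
  \sum_(i < k.+1) m i * V (k - i)%N 1%N l = m (k.+1 + l)%N - m k.+1 * m l.
Proof. by rewrite convolution_V convolution_cross. Qed.

Lemma convolution_G k l :
  \sum_(i < k.+1) m i * G (k - i)%N l = - (k.+1%:R * m (k + l)%N).
Proof.
elim: k l => [|k IH] l; first by rewrite big_ord1 /= G0 m0 mul1r mul1r.
rewrite big_ord_recr /= subnn G0.
under eq_bigr => i _ do rewrite (subSn (leq_ord i)) GS mulrBr.
rewrite sumrB IH convolution_V1 addnS -addSn.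
rewrite [k.+2%:R]mulrS; ring.
Qed.

End Recursions.
End Convolution.

Section TypeBprimeAlgebra.
Variables (R : realType) (A : algType R[i]) (F : lmodType R[i]).
Variables (mulF : F -> F -> F) (actL : A -> F -> F) (actR : F -> A -> F).
Hypothesis Fax : Fstructure_axioms mulF actL actR.

Local Notation mulB := (mulB mulF actL actR).

Lemma mulF_linl h : linear (mulF^~ h).
Proof. by case: Fax => H _ k f g; exact: H. Qed.
Lemma mulF_linr h : linear (mulF h).
Proof. by case: Fax => _ [H _] k f g; exact: H. Qed.
Lemma actL_linr b : linear (actL b).
Proof. by case: Fax => _ [_ [_ [_ [H _]]]] k f g; exact: H. Qed.
Lemma actR_linl c : linear (actR^~ c).
Proof. by case: Fax => _ [_ [_ [_ [_ [_ [H _]]]]]] k f g; exact: H. Qed.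

Lemma mulFA f g h : mulF f (mulF g h) = mulF (mulF f g) h.
Proof. by case: Fax => _ [_ [H _]]. Qed.
Lemma actL1 f : actL 1 f = f.
Proof. by case: Fax => _ [_ [_ [_ [_ [_ [_ [H _]]]]]]]. Qed.
Lemma actR1 f : actR f 1 = f.
Proof. by case: Fax => _ [_ [_ [_ [_ [_ [_ [_ [H _]]]]]]]]. Qed.
Lemma actLM b c f : actL (b * c) f = actL b (actL c f).
Proof. by case: Fax => _ [_ [_ [_ [_ [_ [_ [_ [_ [H _]]]]]]]]]. Qed.
Lemma actRM b c f : actR f (b * c) = actR (actR f b) c.
Proof. by case: Fax => _ [_ [_ [_ [_ [_ [_ [_ [_ [_ [H _]]]]]]]]]]. Qed.
Lemma actLR b c f : actL b (actR f c) = actR (actL b f) c.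
Proof. by case: Fax => _ [_ [_ [_ [_ [_ [_ [_ [_ [_ [_ [H _]]]]]]]]]]]. Qed.
Lemma actL_mulF b f g : actL b (mulF f g) = mulF (actL b f) g.
Proof. by case: Fax => _ [_ [_ [_ [_ [_ [_ [_ [_ [_ [_ [_ [H _]]]]]]]]]]]]. Qed.
Lemma mulF_actR b f g : mulF (actR f b) g = mulF f (actL b g).
Proof. by case: Fax => _ [_ [_ [_ [_ [_ [_ [_ [_ [_ [_ [_ [_ [H _]]]]]]]]]]]]]. Qed.
Lemma actR_mulF b f g : actR (mulF f g) b = mulF f (actR g b).
Proof. by case: Fax => _ [_ [_ [_ [_ [_ [_ [_ [_ [_ [_ [_ [_ [_ H]]]]]]]]]]]]]. Qed.

Lemma mulFDl h f g : mulF (f + g) h = mulF f h + mulF g h.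
Proof. by rewrite (linear_funD (mulF_linl h)). Qed.
Lemma mulFBl h f g : mulF (f - g) h = mulF f h - mulF g h.
Proof. by rewrite (linear_funB (mulF_linl h)). Qed.
Lemma mulFNl h f : mulF (- f) h = - mulF f h.
Proof. by rewrite (linear_funN (mulF_linl h)). Qed.
Lemma mulFDr h f g : mulF h (f + g) = mulF h f + mulF h g.
Proof. by rewrite (linear_funD (mulF_linr h)). Qed.
Lemma mulFNr h f : mulF h (- f) = - mulF h f.
Proof. by rewrite (linear_funN (mulF_linr h)). Qed.
Lemma mulF0r h : mulF h 0 = 0.
Proof. by rewrite (linear_fun0 (mulF_linr h)). Qed.
Lemma actLDr b f g : actL b (f + g) = actL b f + actL b g.
Proof. by rewrite (linear_funD (actL_linr b)). Qed.
Lemma actLNr b f : actL b (- f) = - actL b f.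
Proof. by rewrite (linear_funN (actL_linr b)). Qed.
Lemma actL0r b : actL b 0 = 0.
Proof. by rewrite (linear_fun0 (actL_linr b)). Qed.
Lemma actRDl c f g : actR (f + g) c = actR f c + actR g c.
Proof. by rewrite (linear_funD (actR_linl c)). Qed.
Lemma actRBl c f g : actR (f - g) c = actR f c - actR g c.
Proof. by rewrite (linear_funB (actR_linl c)). Qed.
Lemma actRNl c f : actR (- f) c = - actR f c.
Proof. by rewrite (linear_funN (actR_linl c)). Qed.

Lemma mulB_assoc : associative mulB.
Proof.
case=> [a1 f1] [a2 f2] [a3 f3]; rewrite /mulB /=; congr pair; first exact: mulrA.
rewrite !actLDr !actRDl !mulFDl !mulFDr actLM actLR actL_mulF actRM.
rewrite mulF_actR actR_mulF mulFA !addrA.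
by rewrite [RHS](ACl (1*2*5*3*6*4*7)%AC).
Qed.

Lemma mulB_scalar x b : mulB x (b, 0) = (x.1 * b, actR x.2 b).
Proof. by rewrite /mulB /= actL0r mulF0r add0r addr0. Qed.

Variable q : F.
Hypothesis qq : mulF q q = q.

Local Notation p := (1, - q).

(* [kills_q x] says that x q = 0 in B, i.e. x p = x. *)
Definition kills_q (x : A * F) : Prop := actL x.1 q + mulF x.2 q = 0.

Lemma mulB_p x : mulB x p = (x.1, x.2 - actL x.1 q - mulF x.2 q).
Proof. by rewrite /mulB /= mulr1 actLNr actR1 mulFNr [- _ + _]addrC. Qed.

Lemma kills_q_mulB_p x : kills_q (mulB x p).
Proof.
rewrite /kills_q mulB_p /= !mulFBl -actL_mulF -mulFA qq.
by rewrite addrAC subrr sub0r subrr.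
Qed.

Lemma mulB_p_id x : kills_q x -> mulB x p = x.
Proof.
by rewrite /kills_q mulB_p => /eqP; rewrite addr_eq0 => /eqP ->; rewrite opprK addrK; case: x.
Qed.

Variables (phi : A -> R[i]) (Phi : F -> R[i]).
Hypotheses (Phi_lin : linear Phi) (Phi_q : Phi q = 1)
           (indep : cyclic_antimonotone_indep mulF actL actR phi Phi q).

Lemma PhiB x y : Phi (x - y) = Phi x - Phi y.
Proof. by rewrite (linear_funB Phi_lin). Qed.
Lemma PhiN x : Phi (- x) = - Phi x.
Proof. by rewrite (linear_funN Phi_lin). Qed.

Definition qcat (x : F) (ds : seq A) : F := foldl (fun y d => mulF (actR y d) q) x ds.

Lemma qcatB x y ds : qcat (x - y) ds = qcat x ds - qcat y ds.
Proof. by elim: ds x y => [|d ds IH] x y //=; rewrite actRBl mulFBl IH. Qed.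

Lemma qpow_q n : qpow mulF q n = q.
Proof. by rewrite /qpow; elim: n.-1 => [|k IH] //=; rewrite IH qq. Qed.

Lemma wordq_qcat (b : nat -> A) k :
  wordq mulF actL actR q b k = qcat (actL (b 0%N) q) [seq b i | i <- iota 1 k].
Proof.
elim: k => [|k IH] //.
by rewrite [LHS]/= IH -(addn1 k) iotaD cats1 map_rcons /qcat foldl_rcons add1n addn1.
Qed.

Lemma Phi_word b ds c : Phi (actR (qcat (actL b q) ds) c) = phi (b * c) * \prod_(d <- ds) phi d.
Proof.
pose s := nth c (b :: ds).
have s_ds : [seq s i | i <- iota 1 (size ds)] = ds.
  by rewrite map_nth_iota /= ?subn1 // drop0 take_size.
have := indep s (ltn0Sn (size ds)).
rewrite /= wordq_qcat s_ds qpow_q Phi_q mulr1 /s /= nth_default // => ->.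
by rewrite -[in RHS]s_ds big_map /index_iota subn1.
Qed.

Lemma Phi_word0 b c : Phi (actR (actL b q) c) = phi (b * c).
Proof. by rewrite -[actL b q]/(qcat _ [::]) Phi_word big_nil mulr1. Qed.

Lemma Phi_word1 b d c : Phi (actR (mulF (actR (actL b q) d) q) c) = phi (b * c) * phi d.
Proof. by rewrite -[mulF _ q]/(qcat _ [:: d]) Phi_word big_seq1. Qed.

Definition qfactorizes (x : F) : Prop :=
  forall ds c, Phi (actR (qcat x ds) c) = \prod_(d <- ds) phi d * Phi (actR x c).

Lemma qfactorizes_word b : qfactorizes (actL b q).
Proof. by move=> ds c; rewrite Phi_word Phi_word0 mulrC. Qed.

Lemma qfactorizesB x y : qfactorizes x -> qfactorizes y -> qfactorizes (x - y).
Proof. by move=> Hx Hy ds c; rewrite qcatB !actRBl !PhiB Hx Hy mulrBr. Qed.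

Lemma qfactorizes_append x e : qfactorizes x -> qfactorizes (mulF (actR x e) q).
Proof.
move=> Hx ds c; rewrite -[qcat _ ds]/(qcat x (e :: ds)) Hx big_cons.
by rewrite -[mulF _ q]/(qcat x [:: e]) Hx big_seq1 mulrA [phi e * _]mulrC.
Qed.

Variable a : A.

Local Notation pap := (mulB (mulB p (a, 0)) p).
Local Notation papow := (powp mulF actL actR p pap).

Lemma papow_kills_q k : kills_q (papow k).
Proof.
case: k => [|k]; last by rewrite /= mulB_assoc; exact: kills_q_mulB_p.
by rewrite /kills_q /= actL1 mulFNl qq subrr.
Qed.

Lemma papowS k : papow k.+1 = mulB (mulB (papow k) (a, 0)) p.
Proof. by rewrite /= !mulB_assoc (mulB_p_id (papow_kills_q k)). Qed.

Lemma papow_fst k : (papow k).1 = a ^+ k.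
Proof. by elim: k => [|k IH] //; rewrite papowS /= mulr1 IH exprSr. Qed.

(* The element pap^k e q of B, which lies in F. *)
Definition papowq k e : F := actL (a ^+ k * e) q + mulF (actR (papow k).2 e) q.

Lemma papowS_snd k : (papow k.+1).2 = actR (papow k).2 a - papowq k a.
Proof. by rewrite papowS mulB_scalar mulB_p /= papow_fst /papowq opprD addrA. Qed.

Lemma papowqS k e : papowq k.+1 e = papowq k (a * e) - mulF (actR (papowq k a) e) q.
Proof.
rewrite {1}/papowq papowS_snd actRBl -actRM mulFBl exprSr -mulrA.
by rewrite /papowq addrA.
Qed.

Lemma qfactorizes_papowq k e : qfactorizes (papowq k e).
Proof.
elim: k e => [|k IH] e.
  rewrite /papowq /= mul1r actRNl mulFNl; apply: qfactorizesB; first exact: qfactorizes_word.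
  by rewrite -[X in actR X _](actL1 q); apply/qfactorizes_append/qfactorizes_word.
by rewrite papowqS; apply: qfactorizesB; [exact: IH | exact/qfactorizes_append/IH].
Qed.

Lemma Phi_papowq0 j l :
  Phi (actR (papowq 0 (a ^+ j)) (a ^+ l)) = phi (a ^+ (j + l)) - phi (a ^+ j) * phi (a ^+ l).
Proof.
rewrite /papowq /= mul1r actRNl mulFNl actRBl PhiB Phi_word0 exprD.
by rewrite -[X in actR X (a ^+ j)](actL1 q) Phi_word1 mul1r mulrC.
Qed.

Lemma Phi_papowqS k j l :
  Phi (actR (papowq k.+1 (a ^+ j)) (a ^+ l)) =
  Phi (actR (papowq k (a ^+ j.+1)) (a ^+ l))
    - phi (a ^+ j) * Phi (actR (papowq k (a ^+ 1)) (a ^+ l)).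
Proof.
rewrite papowqS actRBl PhiB -exprS -[mulF _ q]/(qcat _ [:: a ^+ j]) qfactorizes_papowq.
by rewrite big_seq1.
Qed.

Lemma Phi_papow0 l : Phi (actR (papow 0).2 (a ^+ l)) = - phi (a ^+ l).
Proof. by rewrite /= actRNl PhiN -[X in actR X _](actL1 q) Phi_word0 mul1r. Qed.

Lemma Phi_papowS k l :
  Phi (actR (papow k.+1).2 (a ^+ l)) =
  Phi (actR (papow k).2 (a ^+ l.+1)) - Phi (actR (papowq k (a ^+ 1)) (a ^+ l)).
Proof. by rewrite papowS_snd actRBl PhiB -actRM -exprS. Qed.

Lemma Phi_papow_snd (t : nat -> R[i]) :
  phi 1 = 1 ->
  (forall n, n.+1%:R * phi (a ^+ n) = \sum_(j < n.+1) t j * phi (a ^+ (n - j))) ->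
  forall n, Phi (papow n).2 = - t n.
Proof.
move=> phi1 Ht n.
pose m j := phi (a ^+ j); have m0 : m 0%N = 1 by rewrite /m expr0.
pose V k j l := Phi (actR (papowq k (a ^+ j)) (a ^+ l)).
pose G k l := Phi (actR (papow k).2 (a ^+ l)).
have convG := convolution_G (V := V) (G := G) m0 Phi_papowq0 Phi_papowqS Phi_papow0 Phi_papowS.
suff: G^~ 0%N =1 (fun k => - t k) by move/(_ n); rewrite /G expr0 actR1.
apply: (deconvolution_unique m0) => {}n.
rewrite convG addn0 Ht (convolutionC t m) -sumrN.
by apply: eq_bigr => i _; rewrite mulrN mulrC.
Qed.

End TypeBprimeAlgebra.

Lemma distribution_Xn (R : realType) (A : algType R[i]) (phi : A -> R[i]) (a : A) n :
  distribution phi a 'X^n = phi (a ^+ n).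
Proof.
rewrite /distribution size_polyXn big_ord_recr /= coefXn eqxx mul1r big1 ?add0r // => i _.
by rewrite coefXn ltn_eqF // mul0r.
Qed.

Lemma oneB_sub_q (R : realType) (A : algType R[i]) (F : lmodType R[i]) (q : F) :
  addB (oneB A F) (oppB (0, q)) = (1, - q).
Proof. by rewrite /addB /oneB /oppB /= oppr0 addr0 add0r. Qed.

Theorem proposition5p4
  (R : realType) (A : algType R[i]) (F : lmodType R[i])
  (mulF : F -> F -> F) (actL : A -> F -> F) (actR : F -> A -> F)
  (phi : A -> R[i]) (Phi : F -> R[i])
  (HB' : ncps_typeBprime mulF actL actR phi Phi)
  (q : F) (Hqq : mulF q q = q) (HPhiq : Phi q = 1)
  (Hind : cyclic_antimonotone_indep mulF actL actR phi Phi q)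
  (a : A) (tau : {poly R[i]} -> R[i])
  (Htau : inverse_Markov_Krein (distribution phi a) tau) :
  let p : A * F := addB (oneB A F) (oppB (0, q)) in
  let at_ : A * F := mulB mulF actL actR (mulB mulF actL actR p (a, 0)) p in
  let psi := fun x : A * F => phiB phi x in
  let psi' := fun x : A * F => phiB phi x + phiB' Phi x in
  forall n : nat,
    psi (powp mulF actL actR p at_ n) = distribution phi a 'X^n /\
    psi' (powp mulF actL actR p at_ n) = distribution phi a 'X^n - tau 'X^n.
Proof.
move=> p at_ psi psi' n.
case: HB' => Fax _ Phi_lin phi1; case: Htau => _ Htau.
have Ht k : k.+1%:R * phi (a ^+ k) = \sum_(j < k.+1) tau 'X^j * phi (a ^+ (k - j)).
  by rewrite -distribution_Xn Htau; apply: eq_bigr => j _; rewrite distribution_Xn.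
rewrite /psi /psi' /phiB /phiB' /at_ /p oneB_sub_q distribution_Xn (papow_fst Fax Hqq).
by rewrite (Phi_papow_snd Fax Hqq Phi_lin HPhiq Hind (t := fun j => tau 'X^j) phi1 Ht).
Qed.
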